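(* Let $W=W(v_0;v_1,\dots,v_k)$ be a $k$-wheel and let $d:[1,k]\to\{1,2\}$ be a nonconstant function. Then there are exactly two coupled trees $T$ of $W$ such that $\operatorname{val}_T(v_i)=d(i)$ for all $i\in[1,k]$. (Consequently $W$ has exactly $2^{k+1}-4$ coupled trees.)
   Context: For $k\ge 3$ and distinct vertices $v_0,\dots,v_k$, the $k$-wheel $W=W(v_0;v_1,\dots,v_k)$ is the graph whose edges are the radii $v_0v_i$ ($1\le i\le k$) and the chords $v_iv_{i+1}$ ($1\le i\le k$), with $v_{k+1}=v_1$. A coupled tree of $W$ is a spanning tree $T\subseteq E(W)$ of $V(W)$ such that $E(W)\setminus T$ is also a spanning tree of $V(W)$. $\operatorname{val}_T(v)$ is the number of edges of $T$ incident to $v$. *)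

From mathcomp Require Import all_boot.
Set Implicit Arguments. Unset Strict Implicit. Unset Printing Implicit Defensive.

(* The k-wheel W(v0; v1,...,vk).  Vertices: 'I_k.+1, vertex 0 is the hub v0,
   vertex (lift ord0 i) (value i+1) is the rim vertex v_(i+1), for i : 'I_k. *)
Definition wvertex (k : nat) := 'I_k.+1.
Definition hub (k : nat) : wvertex k := ord0.
Definition rim (k : nat) (i : 'I_k) : wvertex k := lift ord0 i.

Definition rnext (k : nat) (i : 'I_k) : 'I_k :=
  Ordinal (ltn_pmod i.+1 (leq_ltn_trans (leq0n i) (ltn_ord i))).

(* Edges of W: inl i = radius v0 v_(i+1); inr i = chord v_(i+1) v_(i+2)
   (indices mod k). *)
Definition wedge (k : nat) := ('I_k + 'I_k)%type.

Definition ends (k : nat) (e : wedge k) : wvertex k * wvertex k :=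
  match e with
  | inl i => (hub k, rim i)
  | inr i => (rim i, rim (rnext i))
  end.

Definition incident (k : nat) (e : wedge k) (v : wvertex k) : bool :=
  ((ends e).1 == v) || ((ends e).2 == v).

Definition adj (k : nat) (T : {set wedge k}) : rel (wvertex k) :=
  fun x y => [exists e in T, ((ends e).1 == x) && ((ends e).2 == y)
                           || ((ends e).1 == y) && ((ends e).2 == x)].

Definition spanning_connected (k : nat) (T : {set wedge k}) : bool :=
  [forall x, forall y, connect (adj T) x y].

(* (V(W), T) is acyclic: no edge of T lies on a cycle, i.e. the ends of
   every edge e of T are not connected in T \ {e}. *)
Definition acyclic (k : nat) (T : {set wedge k}) : bool :=
  [forall e in T, ~~ connect (adj (T :\ e)) (ends e).1 (ends e).2].

Definition spanning_tree (k : nat) (T : {set wedge k}) : bool :=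
  spanning_connected T && acyclic T.

Definition coupled_tree (k : nat) (T : {set wedge k}) : bool :=
  spanning_tree T && spanning_tree (~: T).

Definition valence (k : nat) (T : {set wedge k}) (v : wvertex k) : nat :=
  #|[set e in T | incident e v]|.

From mathcomp Require Import all_boot zify.
Set Implicit Arguments. Unset Strict Implicit. Unset Printing Implicit Defensive.

(* Write r_i for the radius at v_i and c_i for the chord v_i v_(i+1), and colour
   each edge by whether it lies in T.  If T and its complement are both
   acyclic, no colour class contains the rim, nor two
   radii r_s, r_(s+m) together with the chords c_s, ..., c_(s+m-1) between them.
   Walking around the rim, this forces the radius at the end of every maximal
   run of equally coloured chords to have the opposite colour, so either
   r_i is in T exactly when c_i is not (for all i), or r_(i+1) is in T exactly
   when c_i is not (for all i), the chord pattern being nonconstant.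
   Conversely both patterns give coupled trees: from each rim vertex, follow
   its chords in T forwards (resp. backwards) until the first vertex whose
   radius is in T.  In these two families val_T(v_i) is 1 + [c_(i-1) in T],
   resp. 1 + [c_i in T], so a nonconstant d is realised exactly once in each,
   and there are 2 (2^k - 2) coupled trees in all. *)

Section HittingTime.
Variables (T : Type) (f : T -> T) (p : pred T).
Hypothesis hit : forall x, exists n, p (iter n f x).

Definition hit_time x := ex_minn (hit x).

Lemma hit_timeS x : ~~ p x -> hit_time x = (hit_time (f x)).+1.
Proof.
move=> npx; rewrite /hit_time.
case: ex_minnP => m pm min_m; case: ex_minnP => n pn min_n.
case: m pm min_m => [|m] /= pm min_m; first by rewrite pm in npx.
apply/eqP; rewrite eqSS eqn_leq; apply/andP; split.
  by rewrite -ltnS; apply: min_m; rewrite iterSr.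
by apply: min_n; rewrite -iterSr.
Qed.

End HittingTime.

Lemma fconnect_height_le (T : finType) (f : T -> T) (h : T -> nat) :
  (forall x, h (f x) <= h x) -> forall x y, fconnect f x y -> h y <= h x.
Proof.
move=> hf x y /connectP[q fq ->]; elim: q x fq => //= z q IH x /andP[/eqP <- fq].
exact: leq_trans (IH _ fq) (hf x).
Qed.

Lemma fconnect_step (T : finType) (f : T -> T) x y :
  x != y -> fconnect f (f x) y = fconnect f x y.
Proof.
move=> nxy; apply/idP/idP; first exact: connect_trans (fconnect1 f x).
case/connectP=> -[/= _ yx|z q /= /andP[/eqP <- fq] ->]; first by rewrite yx eqxx in nxy.
by apply/connectP; exists q.
Qed.

Definition nonconstant (I : finType) (a : I -> bool) :=
  [exists i, a i] && [exists i, ~~ a i].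

Lemma nonconstant_of_neq (I : finType) (a : I -> bool) i j :
  a i != a j -> nonconstant a.
Proof.
by case ai: (a i); case aj: (a j) => // _; apply/andP; split; apply/existsP;
  [exists i | exists j | exists j | exists i]; rewrite ?ai ?aj.
Qed.

Lemma nonconstant_comp (I J : finType) (f : I -> J) (g : J -> I) (a : J -> bool) :
  cancel g f -> nonconstant a -> nonconstant (a \o f).
Proof.
move=> gK /andP[/existsP[j aj] /existsP[j' aj']].
by apply/andP; split; apply/existsP; [exists (g j) | exists (g j')]; rewrite /= gK.
Qed.

Lemma card_nonconstant (I : finType) :
  0 < #|I| -> #|[set a : {ffun I -> bool} | nonconstant a]| = 2 ^ #|I| - 2.
Proof.
case/card_gt0P=> i0 _.
have constC : ~: [set a : {ffun I -> bool} | nonconstant a] =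
              [set [ffun=> true]; [ffun=> false]].
  apply/setP=> a; rewrite !inE negb_and !negb_exists.
  apply/orP/orP=> [[] /forallP a_const | [] /eqP ->]; last 2 first.
  - by right; apply/forallP=> i; rewrite ffunE.
  - by left; apply/forallP=> i; rewrite ffunE.
  - by right; apply/eqP/ffunP=> i; rewrite ffunE (negbTE (a_const i)).
  - by left; apply/eqP/ffunP=> i; rewrite ffunE (negbNE (a_const i)).
have const_neq : [ffun=> true] != [ffun=> false] :> {ffun I -> bool}.
  by apply/eqP=> /ffunP/(_ i0); rewrite !ffunE.
have := cardsC [set a : {ffun I -> bool} | nonconstant a].
by rewrite constC cards2 const_neq card_ffun card_bool => <-; rewrite addnK.
Qed.

Arguments rnext {k}.

Section Wheel.
Variable k : nat.

Lemma val_iter_rnext n (i : 'I_k) : val (iter n rnext i) = (i + n) %% k.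
Proof.
elim: n => [|n IH] /=; first by rewrite addn0 modn_small.
by rewrite IH -[((i + n) %% k).+1]addn1 modnDml addn1 addnS.
Qed.

Lemma iter_rnext_k (i : 'I_k) : iter k rnext i = i.
Proof. by apply: val_inj; rewrite val_iter_rnext modnDr modn_small. Qed.

Lemma iter_rnext_neq n (i : 'I_k) : 0 < n < k -> iter n rnext i != i.
Proof.
case/andP=> n_gt0 n_lt_k; apply/eqP=> /(congr1 val) /=; rewrite val_iter_rnext.
move=> E; have : (i + n) %% k == (i + 0) %% k by rewrite E addn0 modn_small.
by rewrite eqn_modDl mod0n modn_small // => /eqP n0; rewrite n0 in n_gt0.
Qed.

Lemma iter_rnext_onto (i j : 'I_k) : exists2 n, n < k & iter n rnext i = j.
Proof.
have k_gt0 : 0 < k by apply: leq_ltn_trans (ltn_ord i).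
exists ((j + (k - i)) %% k); first exact: ltn_pmod.
apply: val_inj; rewrite val_iter_rnext modnDmr addnCA subnKC; last exact: ltnW.
by rewrite modnDr modn_small.
Qed.

Definition rprev (i : 'I_k) : 'I_k := iter k.-1 rnext i.

Lemma rnext_rprev : cancel rprev rnext.
Proof.
by move=> i; rewrite /rprev -iterS prednK ?iter_rnext_k //; apply: leq_ltn_trans (ltn_ord i).
Qed.

Lemma rprev_rnext : cancel rnext rprev.
Proof.
by move=> i; rewrite /rprev -iterSr prednK ?iter_rnext_k //; apply: leq_ltn_trans (ltn_ord i).
Qed.

Lemma rnext_inj : injective (@rnext k).
Proof. exact: can_inj rprev_rnext. Qed.

Lemma iter_rprev_onto (i j : 'I_k) : exists n, iter n rprev i = j.
Proof.
have [n _ <-] := iter_rnext_onto j i; exists n.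
by elim: n => // n IH; rewrite iterSr iterS rprev_rnext.
Qed.

Variant wvertex_spec : wvertex k -> Type :=
  | WvertexHub : wvertex_spec (hub k)
  | WvertexRim i : wvertex_spec (rim i).

Lemma wvertexP v : wvertex_spec v.
Proof. by case: (unliftP ord0 v) => [i ->|->]; constructor. Qed.

Lemma unlift_rim (i : 'I_k) : unlift ord0 (rim i) = Some i.
Proof. exact: liftK. Qed.

Lemma unlift_hub : unlift ord0 (hub k) = None.
Proof. exact: unlift_none. Qed.

Lemma rim_neq_hub (i : 'I_k) : rim i != hub k.
Proof. by rewrite eq_sym neq_lift. Qed.

Lemma rim_inj : injective (@rim k).
Proof. exact: lift_inj. Qed.

Lemma adj_sym (T : {set wedge k}) : symmetric (adj T).
Proof. by move=> x y; apply/existsP/existsP=> -[e]; exists e; rewrite orbC. Qed.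

Lemma adjP (T : {set wedge k}) x y :
  reflect (exists2 e, e \in T & ends e = (x, y) \/ ends e = (y, x)) (adj T x y).
Proof.
apply: (iffP existsP)=> [[e /andP[eT /orP[] /andP[/eqP <- /eqP <-]]] | [e eT [] E]];
  exists e; rewrite -?surjective_pairing ?eT ?E ?eqxx ?orbT //; by [left | right].
Qed.

(* [par i] is the parent of the rim vertex [i], joined to it by the edge
   [ed i]; the height [ht] decreases along parents, so every vertex reaches
   the hub. *)
Lemma parent_tree (T : {set wedge k}) (par : 'I_k -> wvertex k)
    (ht : 'I_k -> nat) (ed : 'I_k -> wedge k) :
  (forall i j, par i = rim j -> ht j < ht i) ->
  (forall i, ends (ed i) = (rim i, par i) \/ ends (ed i) = (par i, rim i)) ->
  T = ed @: [set: 'I_k] -> spanning_tree T.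
Proof.
move=> ht_par ends_ed ->.
pose up v := if unlift ord0 v is Some i then par i else hub k.
pose h v := if unlift ord0 v is Some i then (ht i).+1 else 0.
have up_rim i : up (rim i) = par i by rewrite /up unlift_rim.
have h_rim i : h (rim i) = (ht i).+1 by rewrite /h unlift_rim.
have h_par i : h (par i) < h (rim i).
  rewrite h_rim; case: (wvertexP (par i)) (ht_par i) => [|j] par_i.
    by rewrite /h unlift_hub.
  by rewrite h_rim ltnS; exact: par_i.
have h_up v : h (up v) <= h v.
  by case: (wvertexP v) => [|i]; rewrite ?up_rim ?(ltnW (h_par i)) // /up unlift_hub.
have adj_par i : adj (ed @: [set: 'I_k]) (rim i) (par i).
  by apply/adjP; exists (ed i); [exact: imset_f | exact: ends_ed].
have to_hub v : connect (adj (ed @: [set: 'I_k])) v (hub k).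
  have [n] := ubnP (h v); elim: n v => // n IH v.
  case: (wvertexP v) => [_|i]; first exact: connect0.
  rewrite ltnS => h_i; apply: connect_trans (connect1 (adj_par i)) (IH _ _).
  exact: leq_trans (h_par i) h_i.
apply/andP; split.
  apply/forallP=> x; apply/forallP=> y; apply: connect_trans (to_hub x) _.
  by rewrite (sym_connect_sym (adj_sym _)).
apply/forallP=> e; apply/implyP=> /imsetP[i _ ->].
(* The descendants of rim i are closed in the graph without the edge ed i. *)
pose below := [pred v | fconnect up v (rim i)].
have below_closed : closed (adj (ed @: [set: 'I_k] :\ ed i)) below.
  move=> x y /adjP[e' /setD1P[ne /imsetP[j _ e'E]] ends_e']; subst e'.
  have ji : rim j != rim i by apply: contraNneq ne => /rim_inj ->.
  have below_j : (rim j \in below) = (par j \in below).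
    by rewrite !inE -up_rim fconnect_step.
  by case: (ends_ed j) ends_e' => -> [] [<- <-].
have par_not_below : par i \notin below.
  by apply/negP=> /(fconnect_height_le h_up); rewrite leqNgt h_par.
apply/negP=> /(closed_connect below_closed).
have below_i : rim i \in below by rewrite inE connect0.
by case: (ends_ed i) => ->; rewrite below_i (negbTE par_not_below).
Qed.

(* Each rim vertex i with [a i] hangs on the chord [ch i] towards [step i];
   the others hang on their radius. *)
Lemma chordal_tree (T : {set wedge k}) (a : pred 'I_k) (step ch : 'I_k -> 'I_k) :
  injective ch ->
  (forall i, ends (inr (ch i)) = (rim i, rim (step i))
          \/ ends (inr (ch i)) = (rim (step i), rim i)) ->
  (forall i, exists n, ~~ a (iter n step i)) ->
  (forall i, (inl i \in T) = ~~ a i) -> (forall i, (inr (ch i) \in T) = a i) ->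
  spanning_tree T.
Proof.
move=> ch_inj ends_ch hit inlT inrT.
pose par i := if a i then rim (step i) else hub k.
pose ed i := if a i then inr (ch i) else inl i.
apply: (@parent_tree T par (hit_time (p := fun i => ~~ a i) hit) ed).
- move=> i j; rewrite /par; case: ifP => [ai /rim_inj <-|_ /eqP].
    by rewrite (@hit_timeS _ step (fun i => ~~ a i) hit i) ?ai.
  by rewrite eq_sym (negbTE (rim_neq_hub j)).
- by move=> i; rewrite /ed /par; case: (a i); [exact: ends_ch | right].
apply/setP=> e; apply/idP/imsetP=> [|[i _ ->]]; last first.
  by rewrite /ed; case: ifP => ai; rewrite ?inlT ?inrT ?ai.
case: e => [i|j]; first by rewrite inlT => nai; exists i; rewrite // /ed (negbTE nai).
by rewrite -(f_invF ch_inj j) inrT => ai; exists (invF ch_inj j); rewrite // /ed ai.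
Qed.

Definition forward_tree (a : 'I_k -> bool) : {set wedge k} :=
  [set e | match e with inl i => ~~ a i | inr i => a i end].

Definition backward_tree (a : 'I_k -> bool) : {set wedge k} :=
  [set e | match e with inl i => ~~ a (rprev i) | inr i => a i end].

Lemma eq_forward_tree a b : a =1 b -> forward_tree a = forward_tree b.
Proof. by move=> ab; apply/setP=> -[] i; rewrite !inE ab. Qed.

Lemma eq_backward_tree a b : a =1 b -> backward_tree a = backward_tree b.
Proof. by move=> ab; apply/setP=> -[] i; rewrite !inE ab. Qed.

Lemma forward_treeC a : ~: forward_tree a = forward_tree (fun i => ~~ a i).
Proof. by apply/setP=> -[] i; rewrite !inE. Qed.

Lemma backward_treeC a : ~: backward_tree a = backward_tree (fun i => ~~ a i).
Proof. by apply/setP=> -[] i; rewrite !inE. Qed.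

Lemma forward_tree_spanning a : [exists i, ~~ a i] -> spanning_tree (forward_tree a).
Proof.
case/existsP=> j0 aj0; apply: (@chordal_tree _ a rnext id) => // [i|i|i|i].
- by left.
- by have [n _ ij0] := iter_rnext_onto i j0; exists n; rewrite ij0.
- by rewrite inE.
- by rewrite inE.
Qed.

Lemma backward_tree_spanning a : [exists i, ~~ a i] -> spanning_tree (backward_tree a).
Proof.
case/existsP=> j0 aj0.
apply: (@chordal_tree _ (a \o rprev) rprev rprev) => [|i|i|i|i].
- exact: can_inj rnext_rprev.
- by right; rewrite /= rnext_rprev.
- by have [n ij0] := iter_rprev_onto i (rnext j0); exists n; rewrite /= ij0 rprev_rnext.
- by rewrite inE.
- by rewrite inE.
Qed.

Lemma forward_tree_coupled a : nonconstant a -> coupled_tree (forward_tree a).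
Proof.
case/andP=> /existsP[i ai] na; rewrite /coupled_tree forward_treeC.
by rewrite !forward_tree_spanning //; apply/existsP; exists i; rewrite negbK.
Qed.

Lemma backward_tree_coupled a : nonconstant a -> coupled_tree (backward_tree a).
Proof.
case/andP=> /existsP[i ai] na; rewrite /coupled_tree backward_treeC.
by rewrite !backward_tree_spanning //; apply/existsP; exists i; rewrite negbK.
Qed.

Definition chords (T : {set wedge k}) : {ffun 'I_k -> bool} := [ffun i => inr i \in T].

Lemma chords_forward_tree (a : {ffun 'I_k -> bool}) : chords (forward_tree a) = a.
Proof. by apply/ffunP=> i; rewrite ffunE inE. Qed.

Lemma chords_backward_tree (a : {ffun 'I_k -> bool}) : chords (backward_tree a) = a.
Proof. by apply/ffunP=> i; rewrite ffunE inE. Qed.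

Lemma forward_tree_neq_backward_tree a b :
  nonconstant b -> forward_tree a != backward_tree b.
Proof.
case/andP=> /existsP[i1 b1] /existsP[i0 b0]; apply/eqP=> E.
have ab i : a i = b i by have := congr1 (fun S : {set wedge k} => inr i \in S) E; rewrite /= !inE.
have b_rnext i : b (rnext i) = b i.
  have := congr1 (fun S : {set wedge k} => inl (rnext i) \in S) E.
  by rewrite /= !inE rprev_rnext ab => /negb_inj.
have [n _ i1n] := iter_rnext_onto i0 i1.
suff: b i0 = b (iter n rnext i0) by rewrite i1n (negbTE b0) b1.
by elim: n {i1n} => //= n ->; rewrite b_rnext.
Qed.

Lemma chord_path (S : {set wedge k}) u m :
  (forall j, j < m -> inr (iter j rnext u) \in S) ->
  connect (adj S) (rim u) (rim (iter m rnext u)).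
Proof.
elim: m => [|m IH] chS; first exact: connect0.
apply: connect_trans (IH (fun j jm => chS j (ltnW jm))) (connect1 _).
by apply/adjP; exists (inr (iter m rnext u)); [exact: chS | left].
Qed.

Lemma fan_cycle (S : {set wedge k}) u m : 0 < m < k ->
  inl u \in S -> inl (iter m rnext u) \in S ->
  (forall j, j < m -> inr (iter j rnext u) \in S) -> ~~ acyclic S.
Proof.
move=> m_range ru rm chS; apply/forallPn; exists (inl u); rewrite negb_imply ru negbK /=.
apply: connect_trans (connect1 (_ : adj _ (hub k) (rim (iter m rnext u)))) _.
  apply/adjP; exists (inl (iter m rnext u)); last by left.
  by rewrite !inE rm andbT (inj_eq (@inl_inj _ _)) iter_rnext_neq.
rewrite (sym_connect_sym (adj_sym _)); apply: chord_path => j jm.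
by rewrite !inE chS.
Qed.

Hypothesis k_gt1 : 1 < k.

Lemma rprev_neq (i : 'I_k) : rprev i != i.
Proof. by apply: iter_rnext_neq; apply/andP; split; lia. Qed.

Lemma rim_cycle (S : {set wedge k}) : (forall i, inr i \in S) -> ~~ acyclic S.
Proof.
pose i0 : 'I_k := Ordinal (ltnW k_gt1).
move=> chS; apply/forallPn; exists (inr i0); rewrite negb_imply chS negbK /=.
rewrite (sym_connect_sym (adj_sym _)).
have := @chord_path (S :\ inr i0) (rnext i0) k.-1.
rewrite -iterSr prednK ?iter_rnext_k; last exact: ltnW.
apply=> j jk; rewrite !inE chS andbT (inj_eq (@inr_inj _ _)) -iterSr.
by apply: iter_rnext_neq; apply/andP; split; lia.
Qed.

Lemma valence_rim (T : {set wedge k}) i :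
  valence T (rim i) = (inl i \in T) + (inr i \in T) + (inr (rprev i) \in T).
Proof.
pose s := [:: inl i; inr i; inr (rprev i)].
have incident_rim e : incident e (rim i) = (e \in s).
  case: e => j; rewrite /incident /= !inE !(inj_eq rim_inj).
    by rewrite (inj_eq (@inl_inj _ _)) !orbF.
  by rewrite !(inj_eq (@inr_inj _ _)) -[j == rprev i](inj_eq rnext_inj) rnext_rprev.
have s_uniq : uniq [seq e <- s | e \in T].
  by apply: filter_uniq; rewrite /= !inE (inj_eq (@inr_inj _ _)) eq_sym rprev_neq.
rewrite /valence (eq_card (B := mem [seq e <- s | e \in T])); last first.
  by move=> e; rewrite !inE mem_filter incident_rim.
by rewrite (card_uniqP s_uniq) size_filter /= addn0 !addnA.
Qed.

Lemma valence_forward_tree a i : valence (forward_tree a) (rim i) = (a (rprev i)).+1.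
Proof. by rewrite valence_rim !inE; case: (a i). Qed.

Lemma valence_backward_tree a i : valence (backward_tree a) (rim i) = (a i).+1.
Proof. by rewrite valence_rim !inE; case: (a i); case: (a (rprev i)). Qed.

Section CoupledTreeShape.
Variable T : {set wedge k}.
Hypotheses (T_acyclic : acyclic T) (TC_acyclic : acyclic (~: T)).
Let r i := inl i \in T.
Let c i := inr i \in T.

Lemma fan_radius b s m : 0 < m < k -> r s = b ->
  (forall j, j < m -> c (iter j rnext s) = b) -> r (iter m rnext s) = ~~ b.
Proof.
move=> m_range rs cs; suff: r (iter m rnext s) != b by case: (r _); case: b {rs cs}.
apply/negP=> /eqP rm; case: b rs cs rm => rs cs rm.
  exact: negP (fan_cycle m_range rs rm cs) T_acyclic.
apply: (negP (@fan_cycle (~: T) s m m_range _ _ _) TC_acyclic); rewrite ?inE.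
- exact/negbT.
- exact/negbT.
- by move=> j /cs /negbT; rewrite inE.
Qed.

Lemma chords_nonconstant b : [exists i, c i != b].
Proof.
case: (boolP [exists i, c i != b]) => // /existsPn c_const.
have c_b i : c i = b by apply/eqP; rewrite -[_ == _]negbK c_const.
case: b c_b {c_const} => c_b.
  by move: T_acyclic; rewrite (negbTE (@rim_cycle T c_b)).
suff /negbTE: ~~ acyclic (~: T) by rewrite TC_acyclic.
by apply: rim_cycle => i; rewrite inE; apply/negbT/c_b.
Qed.

(* A run of chords of colour [b] ending at [p] and opened by a radius of
   colour [b]; by [fan_radius] the radius at [p] then has colour [~~ b]. *)
Definition run_ends_at p := exists b s m,
  [/\ iter m rnext s = p, 0 < m < k, r s = b
    & forall j, j < m -> c (iter j rnext s) = b].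

Lemma run_ends_at_rnext p : run_ends_at p -> run_ends_at (rnext p).
Proof.
case=> b [s [m [<- m_range rs cs]]].
have [cb|cb] := eqVneq (c (iter m rnext s)) b; last first.
  exists (c (iter m rnext s)), (iter m rnext s), 1; split=> // [|[]//].
  by rewrite (fan_radius m_range rs cs); case: (c _) cb; case: b {rs cs}.
have cs' j : j < m.+1 -> c (iter j rnext s) = b.
  by rewrite ltnS leq_eqVlt => /orP[/eqP->|/cs ->].
have m1_lt_k : m.+1 < k.
  have m_lt_k : m < k by case/andP: m_range.
  rewrite ltn_neqAle m_lt_k andbT.
  apply: contraTneq (chords_nonconstant b) => m1_k; apply/existsPn=> i.
  by have [j jk <-] := iter_rnext_onto s i; rewrite cs' ?m1_k // eqxx.
by exists b, s, m.+1; split; rewrite ?m1_lt_k.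
Qed.

Lemma radius_opposes_prev_chord u : r u = c u -> forall i, r (rnext i) = ~~ c i.
Proof.
move=> ruc i.
have [b [s [m [sm m_range rs cs]]]] : run_ends_at (rnext i).
  have [n _ <-] := iter_rnext_onto (rnext u) (rnext i).
  elim: n => [|n]; last exact: run_ends_at_rnext.
  by exists (c u), u, 1; split=> // -[].
have m_gt0 : 0 < m by case/andP: m_range.
have <- : iter m.-1 rnext s = i by apply: rnext_inj; rewrite -iterS prednK.
by rewrite -iterS prednK // (fan_radius m_range rs cs) cs // ltn_predL.
Qed.

End CoupledTreeShape.

Lemma coupled_tree_cases T : coupled_tree T -> nonconstant (chords T) /\
  (T = forward_tree (chords T) \/ T = backward_tree (chords T)).
Proof.
case/andP=> /andP[_ T_acyclic] /andP[_ TC_acyclic]; split.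
  apply/andP; split; [have := chords_nonconstant T_acyclic TC_acyclic false
                     | have := chords_nonconstant T_acyclic TC_acyclic true];
  by case/existsP=> i ci; apply/existsP; exists i; rewrite ffunE; case: (_ \in T) ci.
have [/existsP[u /eqP ruc]|/existsPn r_not_c] :=
  boolP [exists u, (inl u \in T) == (inr u \in T)].
  right; apply/setP=> -[] i; rewrite inE ffunE //.
  by rewrite -(radius_opposes_prev_chord T_acyclic TC_acyclic ruc) rnext_rprev.
left; apply/setP=> -[] i; rewrite inE ffunE //.
by move: (r_not_c i); case: (_ \in T); case: (_ \in T).
Qed.

Lemma coupled_trees_with_valence (a : 'I_k -> bool) : nonconstant a ->
  [set T | coupled_tree T && [forall i, valence T (rim i) == (a i).+1]] =
  [set forward_tree (a \o rnext); backward_tree a].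
Proof.
move=> a_nc; have a_rnext_nc := nonconstant_comp rnext_rprev a_nc.
apply/setP=> T; rewrite !inE; apply/andP/orP=> [[/coupled_tree_cases[_ +] /forallP]|].
  move: (chords T) => c [] -> val_a; [left | right]; apply/eqP.
    apply: eq_forward_tree => i; move: (val_a (rnext i)).
    by rewrite valence_forward_tree rprev_rnext eqSS /=; case: (c i); case: (a _).
  apply: eq_backward_tree => i; move: (val_a i).
  by rewrite valence_backward_tree eqSS; case: (c i); case: (a i).
case=> /eqP ->; split.
- exact: forward_tree_coupled.
- by apply/forallP=> i; rewrite valence_forward_tree /= rnext_rprev.
- exact: backward_tree_coupled.
- by apply/forallP=> i; rewrite valence_backward_tree.
Qed.

Lemma card_coupled_trees : #|[set T : {set wedge k} | coupled_tree T]| = 2 ^ k.+1 - 4.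
Proof.
pose NC := [set a : {ffun 'I_k -> bool} | nonconstant a].
pose F := [set forward_tree a | a : {ffun 'I_k -> bool} in NC].
pose B := [set backward_tree a | a : {ffun 'I_k -> bool} in NC].
have -> : [set T | coupled_tree T] = F :|: B.
  apply/setP=> T; rewrite !inE; apply/idP/orP=> [cT|[] /imsetP[a]]; last 2 first.
  - by rewrite inE => a_nc ->; apply: forward_tree_coupled.
  - by rewrite inE => a_nc ->; apply: backward_tree_coupled.
  have [c_nc [TE|TE]] := coupled_tree_cases cT; [left | right];
    by apply/imsetP; exists (chords T); rewrite ?inE.
have FB0 : F :&: B = set0.
  apply/setP=> T; rewrite !inE; apply/negP=> /andP[/imsetP[a _ ->] /imsetP[b]].
  by rewrite inE => b_nc; apply/eqP; apply: forward_tree_neq_backward_tree.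
have F_inj : injective (fun a : {ffun 'I_k -> bool} => forward_tree a).
  exact: can_inj chords_forward_tree.
have B_inj : injective (fun a : {ffun 'I_k -> bool} => backward_tree a).
  exact: can_inj chords_backward_tree.
rewrite cardsU FB0 cards0 subn0 !card_imset // card_nonconstant card_ord //.
  by have := expnS 2 k; lia.
exact: ltnW.
Qed.

End Wheel.

Theorem proposition3p3 (k : nat) (hk : 3 <= k) (d : 'I_k -> nat)
    (hd : forall i, (d i == 1) || (d i == 2))
    (hnc : exists i j, d i != d j) :
  #|[set T : {set wedge k} | coupled_tree T &&
       [forall i : 'I_k, valence T (rim i) == d i]]| = 2
  /\ #|[set T : {set wedge k} | coupled_tree T]| = 2 ^ k.+1 - 4.
Proof.
have k_gt1 : 1 < k by apply: ltnW.
pose a i := d i == 2.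
have dE i : d i = (a i).+1 by rewrite /a; case/orP: (hd i) => /eqP ->.
have a_nc : nonconstant a.
  case: hnc => i [j]; rewrite !dE => dij; apply: (@nonconstant_of_neq _ _ i j).
  by apply: contra_neq dij => ->.
split; last exact: card_coupled_trees.
under eq_finset => T do under eq_forallb => i do rewrite dE.
by rewrite coupled_trees_with_valence // cards2 forward_tree_neq_backward_tree.
Qed.
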